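(* For every pair of positive integers $g,k$, every graph $G_{g,k}$ obtained by the construction described in the context has girth at least $g$.
   Context: Hypergraph notions. A closed walk of length $\ell$ in a hypergraph $H$ is a sequence $v_0F_0v_1F_1\ldots F_{\ell-1}v_0$ with $v_i,v_{i+1}\in F_i$ for all $0\le i<\ell$ (indices mod $\ell$), $F_i\ne F_{i+1}$ for all $i$ (indices mod $\ell$), and $v_1,\ldots,v_{\ell-1}$ pairwise distinct. An $r$-uniform hypergraph $H$ is tranquil, witnessed by labellings $\lambda=\{\lambda_F\}_{F\in E(H)}$ with $\lambda_F:F\to\{1,\dots,r\}$, if for every closed walk $W=v_0F_0\ldots F_{\ell-1}v_0$ the multigraph on $\{1,\dots,r\}$ with edge multiset $\{\lambda_{F_i}(v_i)\lambda_{F_i}(v_{i+1}):0\le i<\ell\}$ is bridgeless. The chromatic number of a hypergraph is the least number of colours in a vertex colouring with no monochromatic hyperedge; its girth is the length of a shortest Berge cycle (distinct hyperedges $F_1,\dots,F_\ell$ and distinct vertices $x_1,\dots,x_\ell$ with $x_i\in F_i\cap F_{i+1}$, indices mod $\ell$). Construction. Fix a positive integer $g$. $G_{g,1}$ is a single vertex. For $k\ge 2$, given a graph $G_{g,k-1}$ obtained by the construction, with vertex set identified with $\{1,\dots,r\}$, take a finite tranquil $r$-uniform hypergraph $H$ with chromatic number at least $k$ and girth at least $\lceil g/3\rceil$, together with tranquility-witnessing labellings $\lambda_F$, each $\lambda_F:F\to\{1,\dots,r\}$ a bijection. The graph $G_{g,k}$ consists of an independent set $T$ with a bijection $\nu:T\to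 V(H)$, together with, for each hyperedge $F\in E(H)$, a disjoint copy $G_F$ of $G_{g,k-1}$; for each $F\in E(H)$ one adds the perfect matching between $G_F$ and $\nu^{-1}(F)$ joining the vertex of $G_F$ corresponding to $i\in\{1,\dots,r\}$ to the vertex $t\in\nu^{-1}(F)$ with $\lambda_F(\nu(t))=i$. No other edges are present. The girth of a graph is the length of its shortest cycle (infinite if acyclic). *)

From mathcomp Require Import all_boot.
Set Implicit Arguments. Unset Strict Implicit. Unset Printing Implicit Defensive.

Definition girth_ge (T : finType) (e : rel T) (g : nat) : Prop :=
  forall (l : nat) (c : 'I_l -> T),
    3 <= l -> injective c -> (forall i, e (c i) (c (ordS i))) -> g <= l.

(* ---------- Hypergraphs ----------
   A hypergraph on the finite vertex type V is given by a finite type E of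
   hyperedge names together with an injective map [edge : E -> {set V}]
   (so the hyperedges form a set of subsets of V). *)

Definition uniform (V E : finType) (edge : E -> {set V}) (r : nat) : Prop :=
  forall F : E, #|edge F| = r.

Definition proper_colouring (V E : finType) (edge : E -> {set V}) (m : nat)
  (c : V -> 'I_m) : Prop :=
  forall F : E, ~ (exists a : 'I_m, forall v, v \in edge F -> c v = a).

Definition hchi_ge (V E : finType) (edge : E -> {set V}) (k : nat) : Prop :=
  forall m, m < k -> ~ exists c : V -> 'I_m, proper_colouring edge c.

Definition berge_cycle (V E : finType) (edge : E -> {set V}) (l : nat)
  (Fs : 'I_l -> E) (xs : 'I_l -> V) : Prop :=
  [/\ 2 <= l, injective Fs, injective xs &
      forall i, xs i \in edge (Fs i) /\ xs i \in edge (Fs (ordS i))].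

Definition hgirth_ge (V E : finType) (edge : E -> {set V}) (m : nat) : Prop :=
  forall l Fs xs, @berge_cycle V E edge l Fs xs -> m <= l.

(* Closed walk v_0 F_0 v_1 F_1 ... F_{l-1} v_0 of length l. *)
Definition closed_walk (V E : finType) (edge : E -> {set V}) (l : nat)
  (vs : 'I_l -> V) (Fs : 'I_l -> E) : Prop :=
  [/\ forall i, vs i \in edge (Fs i),
      forall i, vs (ordS i) \in edge (Fs i),
      forall i, Fs i != Fs (ordS i) &
      forall i j : 'I_l, 0 < i -> 0 < j -> vs i = vs j -> i = j].

(* Multigraphs on a finite type, given by the list of their edges
   (an edge is a pair of endpoints, loops allowed, read unordered). *)
Definition mg_adj (L : finType) (s : seq (L * L)) : rel L :=
  fun x y => ((x, y) \in s) || ((y, x) \in s).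

Definition bridgeless (L : finType) (s : seq (L * L)) : Prop :=
  forall p, p \in s -> connect (mg_adj (rem p s)) p.1 p.2.

Definition walk_label_edges (V E L : finType) (lam : E -> V -> L) (l : nat)
  (vs : 'I_l -> V) (Fs : 'I_l -> E) : seq (L * L) :=
  [seq (lam (Fs i) (vs i), lam (Fs i) (vs (ordS i))) | i <- enum 'I_l].

(* tranquility witnessed by the labellings lam_F : F -> L (only the values
   on F matter). *)
Definition tranquil_by (V E L : finType) (edge : E -> {set V})
  (lam : E -> V -> L) : Prop :=
  forall l vs Fs, @closed_walk V E edge l vs Fs ->
    bridgeless (walk_label_edges lam vs Fs).

Definition labels_bijective (V E L : finType) (edge : E -> {set V})
  (lam : E -> V -> L) : Prop :=
  forall F : E, {in edge F &, injective (lam F)} /\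
                (forall a : L, exists2 v, v \in edge F & lam F v = a).

(* ---------- The construction step ----------
   Vertex set: V (the independent set T, nu = identity) plus, for each
   hyperedge F, a copy {F} x T0 of G_{g,k-1}. *)
Definition step_graph (T0 V E : finType) (e0 : rel T0) (edge : E -> {set V})
  (lam : E -> V -> T0) : rel (V + (E * T0)) :=
  fun x y =>
    match x, y with
    | inl _, inl _ => false
    | inr (F, a), inr (F', b) => (F == F') && e0 a b
    | inl t, inr (F, a) => (t \in edge F) && (lam F t == a)
    | inr (F, a), inl t => (t \in edge F) && (lam F t == a)
    end.

Inductive constructed (g : nat) : nat -> forall T : finType, rel T -> Prop :=
  | constr_base (T : finType) (e : rel T) :
      #|T| = 1 -> (forall x y, e x y = false) -> constructed g 1 e
  | constr_step (k : nat) (T0 : finType) (e0 : rel T0)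
      (V E : finType) (edge : E -> {set V}) (lam : E -> V -> T0)
      (T : finType) (e : rel T) (f : T -> V + (E * T0)) :
      constructed g k e0 ->
      injective edge ->
      uniform edge #|T0| ->
      hchi_ge edge k.+1 ->
      hgirth_ge edge ((g + 2) %/ 3) ->
      tranquil_by edge lam ->
      labels_bijective edge lam ->
      bijective f ->
      (forall x y, e x y = step_graph e0 edge lam (f x) (f y)) ->
      constructed g k.+1 e.

From mathcomp Require Import all_boot zify.
Set Implicit Arguments. Unset Strict Implicit. Unset Printing Implicit Defensive.

(* A cycle of G_{g,k} avoiding T lies in a single copy G_F
   of G_{g,k-1}.  Otherwise its vertices x_0, ..., x_{m-1} in T cut it into arcs,
   the j-th running inside one copy G_{F_j}.  Each arc has at least two vertices,
   because two vertices of T with a common neighbour in G_F would have the same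
   label under the injective lambda_F; and F_j <> F_{j+1}, because otherwise the
   two cycle neighbours of x_j would both be the vertex of G_{F_j} labelled
   lambda_{F_j}(x_j).  So the cycle has length at least 3m, while
   F_0 x_0 F_1 x_1 ... is a closed trail of H, which contains a Berge cycle of
   length at most m; hence 3m >= 3 ceil(g/3) >= g. *)

Lemma girth_ge_small (T : finType) (e : rel T) g : #|T| < 3 -> girth_ge e g.
Proof. by move=> T_lt3 l c l_gt2 /leq_card; rewrite card_ord; lia. Qed.

Lemma girth_ge_inj_hom (T T' : finType) (e : rel T) (e' : rel T') (f : T -> T') g :
  injective f -> (forall x y, e x y -> e' (f x) (f y)) ->
  girth_ge e' g -> girth_ge e g.
Proof.
move=> f_inj f_hom girth' l c l_gt2 c_inj c_adj.
by apply: (girth' l (f \o c)) => // [|i]; [exact: inj_comp | exact: f_hom].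
Qed.

Lemma periodic_modn (X : Type) (D : nat -> X) l :
  (forall i, D (i + l) = D i) -> forall i, D (i %% l) = D i.
Proof.
move=> Dl i; rewrite {2}(divn_eq i l) addnC.
by elim: (i %/ l) => [|q IHq]; rewrite ?addn0 // mulSnr addnA Dl.
Qed.

Section PeriodicCycles.
Variables (X : Type) (e : rel X).

(* A cycle of length [l] is encoded as an [l]-periodic sequence on [nat], so that
   arcs of the cycle are intervals of [nat] and no arithmetic in ['I_l] is needed. *)
Definition periodic_cycle (l : nat) (D : nat -> X) : Prop :=
  [/\ forall i, D (i + l) = D i,
      forall i, e (D i) (D i.+1) &
      forall i j, D i = D j -> i = j %[mod l]].

Lemma periodic_cycle_shift l D r :
  periodic_cycle l D -> periodic_cycle l (fun i => D (i + r)).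
Proof.
case=> Dl Dadj Dinj; split=> [i | i | i j /Dinj /eqP].
- by rewrite addnAC Dl.
- by rewrite addSn.
- by rewrite eqn_modDr => /eqP.
Qed.

End PeriodicCycles.

Lemma girth_geP (T : finType) (e : rel T) g :
  girth_ge e g <-> forall l D, 2 < l -> periodic_cycle e l D -> g <= l.
Proof.
split=> [girth l D l_gt2 [Dl Dadj Dinj] | periodic l c l_gt2 c_inj c_adj].
- apply: (girth l (fun i : 'I_l => D i)) => // [i j /Dinj | i].
  + by rewrite !modn_small // => ij; apply: val_inj.
  + by rewrite /= periodic_modn.
- have l_gt0 : 0 < l by lia.
  pose D i := c (Ordinal (ltn_pmod i l_gt0)).
  apply: (periodic l D) => //; split=> [i | i | i j /c_inj []//].
  + by congr c; apply: val_inj; rewrite /= modnDr.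
  + rewrite /D (_ : Ordinal (ltn_pmod i.+1 _) = ordS (Ordinal (ltn_pmod i l_gt0))) //.
    by apply: val_inj; rewrite /= -[in RHS]addn1 modnDml addn1.
Qed.

Section Marks.
Variables (P : pred nat) (l : nat).

Definition next_mark i := i.+1 + find P (iota i.+1 l).

Definition mark j := iter j next_mark 0.

Lemma next_mark_gt i : i < next_mark i.
Proof. exact: leq_addr. Qed.

Lemma next_mark_min i j : i < j < next_mark i -> ~~ P j.
Proof.
case/andP=> ij j_lt; rewrite /next_mark in j_lt.
have find_le : find P (iota i.+1 l) <= l by rewrite -[leqRHS](size_iota i.+1) find_size.
have j_find : j - i.+1 < find P (iota i.+1 l) by lia.
by have := before_find 0 j_find; rewrite nth_iota ?subnKC ?(leq_trans j_find) // => ->.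
Qed.

Lemma mark_lt : {homo mark : i j / i < j}.
Proof. by apply: homo_ltn => [j i k | j]; [exact: ltn_trans | exact: next_mark_gt]. Qed.

Lemma mark_le : {homo mark : i j / i <= j}.
Proof. exact: ltnW_homo mark_lt. Qed.

Lemma between_marks j t : mark j < t < mark j.+1 -> ~~ P t.
Proof. exact: next_mark_min. Qed.

Hypotheses (l_gt0 : 0 < l) (P_periodic : forall i, P (i + l) = P i) (P0 : P 0).

Lemma has_mark_in_window i : has P (iota i.+1 l).
Proof.
apply/hasP; exists ((i %/ l).+1 * l).
  rewrite mem_iota; have := divn_eq i l; have := ltn_pmod i l_gt0; nia.
by rewrite -(periodic_modn P_periodic) modnMl.
Qed.

Lemma next_markP i : P (next_mark i).
Proof.
have find_lt : find P (iota i.+1 l) < l.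
  by rewrite -[ltnRHS](size_iota i.+1) -has_find has_mark_in_window.
by have := nth_find 0 (has_mark_in_window i); rewrite nth_iota.
Qed.

Lemma next_markD i : next_mark (i + l) = next_mark i + l.
Proof.
rewrite /next_mark -addSn (addnC i.+1) iotaDl find_map.
rewrite (eq_find (_ : preim (addn l) P =1 P)); first lia.
by move=> t; rewrite /= addnC.
Qed.

Lemma markP j : P (mark j).
Proof. by case: j => [|j] //; exact: next_markP. Qed.

Lemma mark_periodic : exists2 m, 0 < m & forall j, mark (j + m) = mark j + l.
Proof.
have mark_ge j : j <= mark j.
  by elim: j => // j IHj; apply: leq_ltn_trans IHj (mark_lt (ltnSn j)).
have [m l_le_m m_min] := ex_minnP (ex_intro (fun j => l <= mark j) l (mark_ge l)).
have m_gt0 : 0 < m by case: m l_le_m {m_min}; rewrite // leqNgt l_gt0.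
have mark_m : mark m = l.
  apply/eqP; rewrite eqn_leq l_le_m andbT leqNgt; apply/negP => l_lt.
  have prev_lt : mark m.-1 < l by rewrite ltnNge; apply/negP => /m_min; lia.
  have := between_marks (j := m.-1) (t := l); rewrite prednK // prev_lt l_lt.
  by rewrite -(add0n l) P_periodic P0 => /(_ isT).
exists m => // j; elim: j => [|j IHj]; first by rewrite add0n mark_m.
by rewrite addSn /= IHj next_markD.
Qed.

End Marks.

Lemma wrap_modS (X : Type) (F : nat -> X) i d k :
  0 < d -> F (i + d) = F i -> F (i + k.+1 %% d) = F (i + (k %% d).+1).
Proof.
move=> d_gt0 F_id; rewrite modnS; case: ifPn => // d_dvd.
rewrite addn0 (_ : (k %% d).+1 = d) //.
apply/eqP; rewrite eqn_leq ltn_pmod //=; apply: contraLR d_dvd; rewrite -ltnNge.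
by move=> lt; rewrite /dvdn -addn1 -modnDml addn1 modn_small.
Qed.

Lemma hgirth_ge_closed_trail (V E : finType) (edge : E -> {set V}) n m
    (F : nat -> E) (x : nat -> V) :
  hgirth_ge edge n -> 0 < m ->
  (forall i, F (i + m) = F i) -> (forall i, F i != F i.+1) ->
  (forall i, x i \in edge (F i) /\ x i \in edge (F i.+1)) ->
  {in gtn m &, injective x} -> n <= m.
Proof.
move=> girth; elim/ltn_ind: m F x => m IHm F x m_gt0 F_per F_neq x_in x_inj.
case: (boolP (injectiveb (fun i : 'I_m => F i))) => [/injectiveP F_inj | ].
  have m_gt1 : 1 < m.
    rewrite ltn_neqAle m_gt0 andbT; apply/eqP => m1.
    by have := F_neq 0; rewrite -(add0n 1) m1 F_per eqxx.
  apply: (girth m (fun i : 'I_m => F i) (fun i : 'I_m => x i)).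
  split=> // [i j /x_inj | i]; first by move/(_ (ltn_ord i) (ltn_ord j))/val_inj.
  by rewrite /= (periodic_modn F_per); exact: x_in.
(* A repeated hyperedge F i = F j (i < j) closes the shorter trail F i, ..., F (j - 1). *)
case/injectivePn=> i [j ij F_ij].
wlog lt_ij : i j ij F_ij / i < j.
  move=> wlog_ij; case: (ltngtP i j) => [|ji|/val_inj /eqP]; last by rewrite (negPf ij).
    exact: wlog_ij.
  by apply: (wlog_ij j i) => //; rewrite eq_sym.
set d := j - i; have d_gt0 : 0 < d by rewrite subn_gt0.
have F_wrap k : F (i + k.+1 %% d) = F (i + (k %% d).+1).
  by apply: wrap_modS; rewrite // subnKC 1?ltnW.
have d_lt_m : d < m by have := ltn_ord j; rewrite /d; lia.
apply: leq_trans (IHm d d_lt_m (fun k => F (i + k %% d)) (fun k => x (i + k %% d)) _ _ _ _ _)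
  (ltnW d_lt_m) => // [k | k | k | k1 k2].
- by rewrite modnDr.
- by rewrite F_wrap addnS.
- by rewrite F_wrap addnS.
- rewrite !inE /= => k1_lt k2_lt; rewrite !modn_small //.
  have in_range k : k < d -> i + k \in gtn m.
    by move=> k_lt; rewrite inE /=; have := ltn_ord j; rewrite /d in k_lt; lia.
  by move/(x_inj _ _ (in_range _ k1_lt) (in_range _ k2_lt))/addnI.
Qed.

Definition is_inl (A B : Type) (x : A + B) : bool := if x is inl _ then true else false.

Section StepGraph.
Variables (T0 V E : finType) (e0 : rel T0) (edge : E -> {set V}) (lam : E -> V -> T0).
Hypothesis lam_inj : forall F, {in edge F &, injective (lam F)}.
Local Notation G := (step_graph e0 edge lam).

Lemma step_graph_copy F a F' b : G (inr (F, a)) (inr (F', b)) -> F' = F.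
Proof. by case/andP=> /eqP. Qed.

Lemma step_graph_common_nbr u w F a :
  G (inl u) (inr (F, a)) -> G (inr (F, a)) (inl w) -> u = w.
Proof.
move=> /andP[u_in /eqP u_a] /andP[w_in /eqP w_a].
by apply: (lam_inj u_in w_in); rewrite u_a w_a.
Qed.

Lemma copy_cycle l D :
  (forall i, ~~ is_inl (D i)) -> periodic_cycle G l D -> exists c, periodic_cycle e0 l c.
Proof.
move=> noT [Dl Dadj Dinj]; case D0: (D 0) (noT 0) => [//|[F a0]] _.
pose c i := if D i is inr (_, a) then a else a0.
have Dc i : D i = inr (F, c i).
  elim: i => [|i IHi]; first by rewrite /c D0.
  move: (Dadj i) (noT i.+1); rewrite IHi /c.
  by case: (D i.+1) => [//|[F' b]] /step_graph_copy ->.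
exists c; split=> [i | i | i j].
- by rewrite /c Dl.
- by have := Dadj i; rewrite !Dc => /andP[].
- by move=> cij; apply: Dinj; rewrite !Dc cij.
Qed.

Section CycleMeetingV.
Variables (l m : nat) (D : nat -> V + E * T0) (x0 : V) (F0 : E).
Hypotheses (l_gt2 : 2 < l) (D_periodic : forall i, D (i + l) = D i)
  (D_adj : forall i, G (D i) (D i.+1)) (D_inj : forall i j, D i = D j -> i = j %[mod l])
  (D0 : D 0 = inl x0).

Let P t := is_inl (D t).
Let mk := mark P l.
Hypotheses (m_gt0 : 0 < m) (mk_periodic : forall j, mk (j + m) = mk j + l).

Let mk_period : mk m = l := mk_periodic 0.

(* [F0] is only a default value, never reached. *)
Definition trail_edge j : E := if D (mk j).+1 is inr (F, _) then F else F0.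
Definition trail_vertex j : V := if D (mk j.+1) is inl v then v else x0.

Lemma D_shift_neq i d : 0 < d < l -> D (i + d) <> D i.
Proof.
move=> d_range /D_inj /eqP; rewrite -{2}(addn0 i) eqn_modDl mod0n modn_small; lia.
Qed.

Let l_gt0 : 0 < l. Proof. lia. Qed.
Let P_periodic t : P (t + l) = P t. Proof. by rewrite /P D_periodic. Qed.
Let P0 : P 0. Proof. by rewrite /P D0. Qed.

Lemma D_mark j : exists u, D (mk j) = inl u.
Proof. by have := markP l_gt0 P_periodic P0 j; rewrite /P; case: (D _) => // u; exists u. Qed.

Lemma segment_in_copy j t : mk j < t < mk j.+1 -> exists a, D t = inr (trail_edge j, a).
Proof.
elim: t => [//|t IHt] /andP[lo hi].
have notT := between_marks (j := j) (t := t.+1) (introT andP (conj lo hi)).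
rewrite ltnS leq_eqVlt in lo; case/orP: lo => [/eqP mk_t | lt].
  by move: notT; rewrite /trail_edge /P -mk_t; case: (D _) => [//|[F b]] _; exists b.
have [a Dt] := IHt (introT andP (conj lt (ltnW hi))).
move: (D_adj t) notT; rewrite Dt /P.
by case: (D t.+1) => [//|[F b]] /step_graph_copy -> _; exists b.
Qed.

Lemma mark_gap j : mk j + 3 <= mk j.+1.
Proof.
have [u Du] := D_mark j; have [w Dw] := D_mark j.+1.
have := mark_lt P l (ltnSn j); rewrite -/mk leqNgt => lt; apply/negP => short.
have [next | next2] : mk j.+1 = (mk j).+1 \/ mk j.+1 = (mk j).+2 by lia.
  by have := D_adj (mk j); rewrite Du -next Dw.
have [|a Da] := segment_in_copy (j := j) (t := (mk j).+1); first by rewrite next2 /=; lia.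
have := D_adj (mk j).+1; have := D_adj (mk j); rewrite Du Da -next2 Dw.
move=> /step_graph_common_nbr/[apply] u_w.
apply: (D_shift_neq (i := mk j) (d := 2)) => //.
by rewrite addn2 -next2 Du Dw u_w.
Qed.

Lemma D_mark_succ j : D (mk j.+1) = inl (trail_vertex j).
Proof. by rewrite /trail_vertex; have [u ->] := D_mark j.+1. Qed.

Lemma D_before_mark j :
  trail_vertex j \in edge (trail_edge j) /\
  D (mk j.+1).-1 = inr (trail_edge j, lam (trail_edge j) (trail_vertex j)).
Proof.
have gap := mark_gap j.
have [|a Da] := segment_in_copy (j := j) (t := (mk j.+1).-1); first lia.
have := D_adj (mk j.+1).-1; rewrite prednK; last lia.
by rewrite Da D_mark_succ => /andP[x_in /eqP ->].
Qed.

Lemma D_after_mark j :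
  trail_vertex j \in edge (trail_edge j.+1) /\
  D (mk j.+1).+1 = inr (trail_edge j.+1, lam (trail_edge j.+1) (trail_vertex j)).
Proof.
have gap := mark_gap j.+1.
have [|b Db] := segment_in_copy (j := j.+1) (t := (mk j.+1).+1); first lia.
by have := D_adj (mk j.+1); rewrite Db D_mark_succ => /andP[x_in /eqP ->].
Qed.

Lemma trail_edge_neq j : trail_edge j != trail_edge j.+1.
Proof.
apply/eqP => same_edge; have gap := mark_gap j.
have [_ Dbefore] := D_before_mark j; have [_ Dafter] := D_after_mark j.
apply: (D_shift_neq (i := (mk j.+1).-1) (d := 2)) => //.
have -> : (mk j.+1).-1 + 2 = (mk j.+1).+1 by lia.
by rewrite Dafter Dbefore same_edge.
Qed.

Lemma trail_edge_periodic j : trail_edge (j + m) = trail_edge j.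
Proof. by rewrite /trail_edge mk_periodic -addSn D_periodic. Qed.

Lemma trail_vertex_inj : {in gtn m &, injective trail_vertex}.
Proof.
have mk_pos j : 0 < mk j.+1 := mark_lt P l (ltn0Sn j).
move=> i j; rewrite !inE /= => i_lt j_lt x_ij.
have D_ij : D (mk i.+1) = D (mk j.+1) by rewrite !D_mark_succ x_ij.
wlog lt_ij : i j i_lt j_lt D_ij {x_ij} / i < j.
  move=> wlog_ij; case: (ltngtP i j) => [|ji|//]; first exact: wlog_ij.
  by apply/esym/wlog_ij.
have := mark_le P l j_lt; have := mark_lt P l (lt_ij : i.+1 < j.+1).
rewrite -/mk mk_period => mk_lt mk_le; exfalso.
apply: (D_shift_neq (i := mk i.+1) (d := mk j.+1 - mk i.+1)); first by have := mk_pos i; lia.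
by rewrite subnKC ?D_ij // ltnW.
Qed.

Lemma three_marks_le_period : 3 * m <= l.
Proof.
have mark_ge j : 3 * j <= mk j.
  by elim: j => // j IHj; have := mark_gap j; lia.
by rewrite -mk_period; exact: mark_ge.
Qed.

Lemma marked_cycle_long g : hgirth_ge edge ((g + 2) %/ 3) -> g <= l.
Proof.
move=> hgirth.
have trail_vertex_in j := conj (D_before_mark j).1 (D_after_mark j).1.
have := hgirth_ge_closed_trail hgirth m_gt0 trail_edge_periodic trail_edge_neq
  trail_vertex_in trail_vertex_inj.
have := three_marks_le_period; lia.
Qed.

End CycleMeetingV.

Lemma cycle_meeting_V_long g l D :
  hgirth_ge edge ((g + 2) %/ 3) -> 2 < l -> periodic_cycle G l D -> is_inl (D 0) -> g <= l.
Proof.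
move=> hgirth l_gt2 [D_per D_adj D_inj] P0; have l_gt0 : 0 < l by lia.
case D0: (D 0) (D_adj 0) => [x0 | ?]; last by rewrite D0 in P0.
case: (D 1) => [// | [F0 _] _].
have P_per t : is_inl (D (t + l)) = is_inl (D t) by rewrite D_per.
have [m m_gt0 mk_per] := mark_periodic (P := fun t => is_inl (D t)) l_gt0 P_per P0.
exact: (marked_cycle_long F0 l_gt2 D_per D_adj D_inj D0 m_gt0 mk_per).
Qed.

Lemma step_graph_girth g :
  girth_ge e0 g -> hgirth_ge edge ((g + 2) %/ 3) -> girth_ge G g.
Proof.
move=> girth0 hgirth; apply/girth_geP => l D l_gt2 D_cycle.
have l_gt0 : 0 < l by lia.
case: (boolP [exists r : 'I_l, is_inl (D r)]) => [/existsP [r Dr] | /existsPn noT].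
  by apply: (cycle_meeting_V_long hgirth l_gt2 (periodic_cycle_shift r D_cycle)).
have [i | c c_cycle] := copy_cycle (D := D) _ D_cycle.
  have [D_per _ _] := D_cycle.
  by rewrite -(periodic_modn D_per) (noT (Ordinal (ltn_pmod i l_gt0))).
exact: (girth_geP e0 g).1 girth0 l c l_gt2 c_cycle.
Qed.

End StepGraph.

Theorem lemma4p2 (g k : nat) : 0 < g -> 0 < k ->
  forall (T : finType) (e : rel T), constructed g k e -> girth_ge e g.
Proof.
move=> _ _ T e; elim=> {k T e} [T e T_1 _ | k T0 e0 V E edge lam T e f _ girth0 _ _ _
  hgirth _ lam_bij f_bij e_f].
  by apply: girth_ge_small; rewrite T_1.
have lam_inj F : {in edge F &, injective (lam F)} := (lam_bij F).1.
apply: girth_ge_inj_hom (bij_inj f_bij) _ (step_graph_girth lam_inj girth0 hgirth).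
by move=> x y; rewrite e_f.
Qed.
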